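(* Let $(X,T)$ be a minimal system, $d\ge2$, and suppose the factor map $\pi:X\to Y=X_{eq}$ onto the maximal equicontinuous factor is almost one-to-one. Let $A=\{y\in X_{eq}:|\pi^{-1}(y)|\ge2\}$. (1) If $2A-A$ is of first category in $X_{eq}$, then $X_{eq}$ is a $2$-step topological characteristic factor of $X$ (saturation for $T\times T^2$). (2) If $d\ge3$ and $B_d:=\bigcup_{1\le i<j\le d}\left(\frac{j}{j-i}A-\frac{i}{j-i}A\right)$ is of first category, then $X_{eq}$ is a $d$-step topological characteristic factor of $X$ (saturation for $T\times T^2\times\cdots\times T^d$).
   Context: $X_{eq}$ is a compact abelian (monothetic) group on which $T$ acts as translation. For an abelian group $G$, $A\subset G$ and rational $r=p/q$, $rA=\{g\in G: qg=pa\text{ for some }a\in A\}$; $B-C=\{b-c:b\in B,c\in C\}$. $Y$ is a $d$-step topological characteristic factor of $X$ via $\pi$ if there is a dense $G_\delta$ set $\Omega\subset X$ such that for all $x\in\Omega$, $L_x=\overline{\{(T^nx,\dots,T^{dn}x):n\in\mathbb{Z}\}}$ satisfies $(\pi^{(d)})^{-1}(\pi^{(d)}(L_x))=L_x$, where $\pi^{(d)}=\pi\times\cdots\times\pi$. *)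

From HB Require Import structures.
From mathcomp Require Import all_boot all_order all_algebra.
From mathcomp Require Import all_classical all_reals all_analysis.
From mathcomp Require Import borel_hierarchy.
Set Implicit Arguments. Unset Strict Implicit. Unset Printing Implicit Defensive.
Import Order.TTheory GRing.Theory Num.Theory.
Import numFieldNormedType.Exports.
Local Open Scope classical_set_scope.
Local Open Scope ring_scope.

Definition iterz {X : Type} (T Ti : X -> X) (n : int) (x : X) : X :=
  match n with
  | Posz k => iter k T x
  | Negz k => iter k.+1 Ti x
  end.

Definition minimal_system {X : topologicalType} (T : X -> X) : Prop :=
  forall C : set X, closed C -> C !=set0 -> T @` C `<=` C -> C = setT.

Definition equicontinuous_sys {Z : uniformType} (S : Z -> Z) : Prop :=
  forall E, entourage E -> exists2 F, entourage F &
    forall x y, F (x, y) -> forall n : nat, E (iter n S x, iter n S y).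

Definition equicontinuous_factor {X : topologicalType} (T : X -> X)
  (Z : uniformType) (S : Z -> Z) (psi : X -> Z) : Prop :=
  [/\ compact [set: Z], hausdorff_space Z, continuous S, equicontinuous_sys S &
      [/\ continuous psi, (forall z, exists x, psi x = z) & forall x, psi (T x) = S (psi x)]].

Definition max_equicontinuous_factor {X : topologicalType} (T : X -> X)
  (Y : topologicalZmodType) (a : Y) (pi : X -> Y) : Prop :=
  [/\ compact [set: Y], hausdorff_space Y,
      [/\ continuous pi, (forall y, exists x, pi x = y) & forall x, pi (T x) = pi x + a] &
      forall (Z : uniformType) (S : Z -> Z) (psi : X -> Z),
        equicontinuous_factor T S psi ->
        exists phi : Y -> Z, continuous phi /\ forall x, psi x = phi (pi x)].

Definition almost_one_to_one {X Y : topologicalType} (pi : X -> Y) : Prop :=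
  exists Om : set X, [/\ Gdelta Om, dense Om &
    forall x, Om x -> pi @^-1` [set pi x] = [set x]].

Definition nowhere_dense {T : topologicalType} (S : set T) : Prop :=
  interior (closure S) = set0.

Definition first_category {T : topologicalType} (S : set T) : Prop :=
  exists F : (set T)^nat, (forall n, nowhere_dense (F n)) /\
    S `<=` \bigcup_n F n.

(** rA = {g : q g = p a for some a in A}, with r = p/q in lowest terms. *)
Definition scale_set {G : zmodType} (r : rat) (A : set G) : set G :=
  [set g | exists2 a, A a & g *~ denq r = a *~ numq r].

Definition set_sub {G : zmodType} (B C : set G) : set G :=
  [set g | exists b c, [/\ B b, C c & g = b - c]].

Definition B_set {G : zmodType} (d : nat) (A : set G) : set G :=
  [set g | exists i j : nat, [/\ (1 <= i)%N, (i < j)%N, (j <= d)%N &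
     set_sub (scale_set (j%:Q / (j - i)%N%:Q) A)
             (scale_set (i%:Q / (j - i)%N%:Q) A) g]].

Definition Lx {X : topologicalType} (T Ti : X -> X) (d : nat) (x : X)
  : set {ptws 'I_d -> X} :=
  closure (range (fun n : int =>
    (fun i : 'I_d => iterz T Ti ((i.+1)%:Z * n) x) : {ptws 'I_d -> X})).

Definition top_char_factor {X Y : topologicalType} (T Ti : X -> X)
  (pi : X -> Y) (d : nat) : Prop :=
  exists Om : set X, [/\ Gdelta Om, dense Om &
    forall x, Om x ->
      [set z : {ptws 'I_d -> X} | exists2 w, @Lx X T Ti d x w &
         (fun i => pi (w i)) = (fun i => pi (z i))] = @Lx X T Ti d x].

From HB Require Import structures.
From mathcomp Require Import all_boot all_order all_algebra.
From mathcomp Require Import all_classical all_reals all_analysis borel_hierarchy.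
Set Implicit Arguments. Unset Strict Implicit. Unset Printing Implicit Defensive.
Import Order.TTheory GRing.Theory Num.Theory.
Local Open Scope classical_set_scope.
Local Open Scope ring_scope.

(* Write y = pi x.  Since pi conjugates T to the rotation by a, every point of
   L_x projects onto a progression (y + t, y + 2t, ..., y + dt).  Conversely z
   lies in L_x as soon as every box (U_i) around z admits a progression whose
   i-th term has its whole fibre in U_i, because the multiples of a are dense
   in X_eq.  If w is in L_x and pi z = pi w, the terms of pi w outside A have
   singleton fibres; if two terms y + it and y + jt lie in A, then y lies in
   (j/(j-i))A - (i/(j-i))A.  So for y outside B_d at most one term is in A, and
   perturbing t moves that term onto a point with a singleton fibre: u |-> ku
   is open onto the subgroup kX_eq, which is open because its cosets are
   represented by multiples of a.  By Baire's theorem the points x with pi x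
   outside the meager set B_d form a dense G_delta. *)

Lemma continuous_closed_image (T U : topologicalType) (f : T -> U) (C : set T) :
  compact [set: T] -> hausdorff_space U -> continuous f -> closed C ->
  closed (f @` C).
Proof.
move=> cT hU cf cC; apply: compact_closed => //.
apply: continuous_compact; first exact: continuous_subspaceT.
exact: (subclosed_compact cC cT).
Qed.

Lemma ptws_nbhs_box (I : eqType) (X : topologicalType) (z : {ptws I -> X})
    (B : set {ptws I -> X}) :
  nbhs z B -> exists U : I -> set X, (forall i, open (U i) /\ U i (z i)) /\
    (forall f : {ptws I -> X}, (forall i, U i (f i)) -> B f).
Proof.
pose box : set_system {ptws I -> X} := fun P =>
  exists U : I -> set X, (forall i, open (U i) /\ U i (z i)) /\
    (forall f : {ptws I -> X}, (forall i, U i (f i)) -> P f).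
have box_filter : Filter box.
  apply: Build_Filter.
  - by exists (fun=> setT); split => // i; split => //; exact: openT.
  - move=> P Q [U [oU UP]] [V [oV VQ]]; exists (fun i => U i `&` V i); split.
      by move=> i; have [? ?] := oU i; have [? ?] := oV i; split => //; exact: openI.
    by move=> f UVf; split; [apply: UP|apply: VQ] => i; case: (UVf i).
  - by move=> P Q PQ [U [oU UP]]; exists U; split => // f /UP /PQ.
suff : box --> z by move=> /(_ B).
apply/cvg_sup => i; apply/cvg_image.
  by apply/seteqP; split => // x _; exists (fun=> x).
move=> N /=; rewrite nbhsE => -[W [oW Wz] WN].
exists [set f : {ptws I -> X} | N (f i)].
  exists (fun j => if j == i then W else setT); split.
    by move=> j; case: eqP => [->|_]; split => //; exact: openT.
  by move=> f /(_ i); rewrite eqxx => /WN.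
by apply/seteqP; split => [x [f Nf <-] //|x Nx]; exists (fun=> x).
Qed.

Lemma open_dense_shrink (X : uniformType) (V O : set X) :
  open V -> V !=set0 -> open O -> dense O ->
  exists2 V' : set X, open V' /\ V' !=set0 & closure V' `<=` V `&` O.
Proof.
move=> oV V0 oO dO; have [p [Vp Op]] := dO V V0 oV.
have /uniform_regular[N Np cN] : nbhs p (V `&` O).
  by apply: open_nbhs_nbhs; split => //; exact: openI.
exists (interior N); first by split; [exact: open_interior|exists p].
by apply: subset_trans cN; apply: closureS; exact: interior_subset.
Qed.

Lemma Baire_compact (X : uniformType) (O : (set X)^nat) : compact [set: X] ->
  (forall n, open (O n) /\ dense (O n)) -> dense (\bigcap_n O n).
Proof.
move=> cX oO W W0 oW.
have shrink (nV : nat * set X) : exists V' : set X, open nV.2 -> nV.2 !=set0 ->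
    [/\ open V', V' !=set0 & closure V' `<=` nV.2 `&` O nV.1].
  case: nV => n V /=; have [[oV V0]|] := pselect (open V /\ V !=set0); last first.
    by move=> h; exists setT => oV V0; exfalso; apply: h.
  have [oOn dOn] := oO n; have [V' [oV' V'0] cV'] := open_dense_shrink oV V0 oOn dOn.
  by exists V'.
have [f hf] := choice shrink.
pose Ws := fix Ws n := if n is k.+1 then f (k, Ws k) else W.
have Ws_ok n : open (Ws n) /\ Ws n !=set0.
  by elim: n => [|k [ok nk]] //=; have [] := hf (k, Ws k) ok nk.
have Ws_shrink k : closure (Ws k.+1) `<=` Ws k `&` O k.
  by have [ok nk] := Ws_ok k; have [] := hf (k, Ws k) ok nk.
pose K n := closure (Ws n.+1).
have K_decr m n : (m <= n)%N -> K n `<=` K m.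
  move=> /subnK <-; elim: (n - m)%N => [|k IH] //=.
  rewrite addSn; apply: subset_trans IH.
  by move=> z /Ws_shrink [] /subset_closure.
pose F := filter_from [set: nat] K.
have F_proper : ProperFilter F.
  apply: filter_from_proper.
    apply: filter_from_filter; first by exists 0%N.
    move=> i j _ _; exists (maxn i j) => //.
    by move=> z Kz; split; apply: K_decr Kz; rewrite ?leq_maxl ?leq_maxr.
  by move=> i _; have [_ [z wz]] := Ws_ok i.+1; exists z; apply: subset_closure.
have [p [_ clp]] := cX F F_proper filterT.
rewrite clusterE in clp.
have Kp n : K n p.
  have : closure (K n) p by apply: clp; exists n.
  by rewrite -(closure_id (K n)).1 //; exact: closed_closure.
exists p; split; first by have /Ws_shrink [] := Kp 0%N.
by move=> n _; have /Ws_shrink [] := Kp n.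
Qed.

Section TopologicalZmodule.
Variable Y : topologicalZmodType.

Lemma zmod_continuousD (T : topologicalType) (f g : T -> Y) :
  continuous f -> continuous g -> continuous (fun x => f x + g x).
Proof.
move=> cf cg x.
apply: (@continuous_comp _ _ _ (fun x => (f x, g x)) (fun p : Y * Y => p.1 + p.2)).
  by apply: cvg_pair; [exact: cf|exact: cg].
exact: add_continuous.
Qed.

Lemma zmod_continuousN (T : topologicalType) (f : T -> Y) :
  continuous f -> continuous (fun x => - f x).
Proof. by move=> cf x; apply: continuous_comp; [exact: cf|exact: opp_continuous]. Qed.

Lemma zmod_continuousMn (T : topologicalType) (f : T -> Y) (k : nat) :
  continuous f -> continuous (fun x => f x *+ k).
Proof.
move=> cf; elim: k => [|k IH].
  have -> : (fun x => f x *+ 0) = fun=> 0 by apply: funext => x; rewrite mulr0n.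
  exact: cst_continuous.
have -> : (fun x => f x *+ k.+1) = fun x => f x + f x *+ k.
  by apply: funext => x; rewrite mulrS.
exact: zmod_continuousD.
Qed.

Lemma natmul_continuous (k : nat) : continuous (fun u : Y => u *+ k).
Proof. by apply: zmod_continuousMn => u; exact: cvg_id. Qed.

Lemma affine_continuous (y : Y) (k : nat) : continuous (fun u : Y => y + u *+ k).
Proof.
by apply: zmod_continuousD; [move=> u; exact: cst_continuous|exact: natmul_continuous].
Qed.

Lemma open_shift (b : Y) (S : set Y) : open S -> open (shift b @^-1` S).
Proof.
move=> oS; apply: open_comp => // x _.
by apply: zmod_continuousD => u; [exact: cvg_id|exact: cst_continuous].
Qed.

Lemma closed_eq_zmod (T : topologicalType) (f g : T -> Y) :
  hausdorff_space Y -> continuous f -> continuous g -> closed [set x | f x = g x].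
Proof.
move=> hY cf cg.
have -> : [set x | f x = g x] = (fun x => f x - g x) @^-1` [set 0].
  apply/seteqP; split => x /=; first by move=> ->; rewrite subrr.
  by move/eqP; rewrite subr_eq0 => /eqP.
apply: preimage_closed; last exact: (accessible_closed_set1 (hausdorff_accessible hY)).
by move=> x _; apply: zmod_continuousD => //; exact: zmod_continuousN.
Qed.

End TopologicalZmodule.

Section MonotheticGroup.
Variables (Y : topologicalZmodType) (a : Y).
Hypotheses (cY : compact [set: Y]) (hY : hausdorff_space Y)
  (a_dense : dense (range (fun n : nat => a *+ n))).

Lemma multiple_in_nbhs (u : Y) (Q : set Y) : nbhs u Q -> exists n, Q (a *+ n).
Proof.
move=> uQ; have [v [Qv [n _ nv]]] := a_dense (ex_intro _ u uQ) (@open_interior _ Q).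
by exists n; rewrite nv; exact: interior_subset.
Qed.

Lemma closed_multiples_setT (S : set Y) :
  closed S -> (forall n, S (a *+ n)) -> S = setT.
Proof.
move=> cS Sa; apply/seteqP; split => // u _; apply: contrapT => nSu.
have uS : nbhs u (~` S) by apply: open_nbhs_nbhs; split => //; rewrite openC.
by have [n /(_ (Sa n))] := multiple_in_nbhs uS.
Qed.

Let coset (m r : nat) := [set a *+ r + v *+ m | v in [set: Y]].

Let closed_cosets m (P : set nat) : closed (\bigcup_(r in `I_m `&` P) coset m r).
Proof.
apply: closed_bigcup => [|r _].
  exact: sub_finite_set (@subIsetl _ _ _) (finite_II m).
by apply: continuous_closed_image => //; exact: affine_continuous.
Qed.

Lemma natmul_cosets m : (0 < m)%N ->
  forall u : Y, exists2 r, (r < m)%N & exists v, u = a *+ r + v *+ m.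
Proof.
move=> m0 u.
have : \bigcup_(r in `I_m `&` setT) coset m r = setT.
  apply: closed_multiples_setT => [|n]; first exact: closed_cosets.
  exists (n %% m)%N; first by split => //; rewrite /= ltn_mod.
  by exists (a *+ (n %/ m)) => //; rewrite -mulrnA -mulrnDr addnC -divn_eq.
by move=> /seteqP[_ /(_ u Logic.I)] [r [rm _] [v _ <-]]; exists r => //; exists v.
Qed.

Lemma natmul_range_open m : (0 < m)%N -> open (range (fun v : Y => v *+ m)).
Proof.
move=> m0; rewrite -closedC.
suff -> : ~` range (fun v : Y => v *+ m) =
    \bigcup_(r in `I_m `&` [set r | ~ range (fun v : Y => v *+ m) (a *+ r)]) coset m r.
  exact: closed_cosets.
apply/seteqP; split => s.
  move=> ns; have [r rm [v sv]] := natmul_cosets m0 s.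
  exists r; last by exists v.
  by split => // -[w _ wr]; apply: ns; exists (w + v) => //; rewrite mulrnDl wr sv.
move=> [r [_ nr] [v _ <-]] [w _ ws]; apply: nr.
by exists (w - v) => //; rewrite mulrnBl ws addrK.
Qed.

(* Multiplication by m is open onto the open subgroup mY: the points of mY
   outside the image of O are the images of the closed set C below. *)
Lemma natmul_open_image m (O : set Y) t : (0 < m)%N -> open O -> O t ->
  nbhs (t *+ m) [set u *+ m | u in O].
Proof.
move=> m0 oO Ot.
pose C := [set c : Y | forall u, O u -> c *+ m <> u *+ m].
have C_closed : closed C.
  rewrite -openC.
  have -> : ~` C = \bigcup_(k in [set k : Y | k *+ m = 0]) (shift (- k) @^-1` O).
    apply/seteqP; split => c.
      move=> /existsNP[u /not_implyP[Ou /contrapT cmu]].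
      exists (c - u); first by rewrite /= mulrnBl cmu subrr.
      by rewrite /= opprB addrC subrK.
    move=> [k /= k0 Ock] Cc; apply: (Cc _ Ock).
    by rewrite mulrnDl mulNrn k0 subr0.
  by apply: bigcup_open => k _; exact: open_shift.
pose N := ~` [set c *+ m | c in C] `&` range (fun v : Y => v *+ m).
have oN : open N.
  apply: openI; last exact: natmul_range_open.
  rewrite openC.
  exact: continuous_closed_image cY hY (@natmul_continuous _ m) C_closed.
have Nt : N (t *+ m) by split; [move=> [c Cc /(Cc t Ot)]|exists t].
apply: filterS (open_nbhs_nbhs (conj oN Nt)) => s [nCs [v _ vs]].
have : ~ C v by move=> Cv; apply: nCs; exists v.
by move=> /existsNP[u /not_implyP[Ou /contrapT vu]]; exists u => //; rewrite -vu.
Qed.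

End MonotheticGroup.

Lemma coprime_div_gcdn m n : (0 < gcdn m n)%N ->
  coprime (m %/ gcdn m n) (n %/ gcdn m n).
Proof.
move=> g0; rewrite /coprime -(eqn_pmul2r g0) mul1n muln_gcdl.
by rewrite !divnK ?dvdn_gcdl ?dvdn_gcdr.
Qed.

Lemma nat_pair_coprime_parts i j : (0 < i)%N -> (i < j)%N ->
  exists p q g : nat, [/\ (0 < q)%N, coprime p q, (0 < g)%N, i = (p * g)%N &
    j = ((p + q) * g)%N].
Proof.
move=> i0 ij; set g := gcdn i (j - i).
have g0 : (0 < g)%N by rewrite gcdn_gt0 i0.
have ip : i = (i %/ g * g)%N by rewrite divnK ?dvdn_gcdl.
have jq : (j - i)%N = ((j - i) %/ g * g)%N by rewrite divnK ?dvdn_gcdr.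
exists (i %/ g)%N, ((j - i) %/ g)%N, g; split => //.
- by move: ij; rewrite -subn_gt0 {1}jq muln_gt0 => /andP[->].
- exact: coprime_div_gcdn.
- by rewrite mulnDl -ip -jq subnKC // ltnW.
Qed.

Definition scaled_set (G : zmodType) (A : set G) (n q : nat) : set G :=
  [set g | exists2 b, A b & g *+ q = b *+ n].

Definition B_term (G : zmodType) (A : set G) (i j : nat) : set G :=
  set_sub (scale_set (j%:Q / (j - i)%N%:Q) A) (scale_set (i%:Q / (j - i)%N%:Q) A).

Definition ratio_diff (G : zmodType) (A : set G) (p q : nat) : set G :=
  set_sub (scaled_set A (p + q) q) (scaled_set A p q).

Definition progressions_meet_once (G : zmodType) (A : set G) (d : nat) (y : G) :=
  forall (t : G) (i j : 'I_d), A (y + t *+ i.+1) -> A (y + t *+ j.+1) -> i = j.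

Section ScaledSets.
Variables (G : zmodType) (A : set G).

Lemma scale_set_coprime p q : (0 < q)%N -> coprime p q ->
  scale_set (p%:Q / q%:Q) A = scaled_set A p q.
Proof.
move=> q0 cpq.
have pq_int : p%:Q / q%:Q = (p%:Z)%:~R / (q%:Z)%:~R by [].
have num_pq : numq (p%:Q / q%:Q) = p.
  by rewrite pq_int coprimeq_num // gtr0_sg ?mul1r // ltz_nat.
have den_pq : denq (p%:Q / q%:Q) = q.
  by rewrite pq_int coprimeq_den // eqz_nat (negbTE (lt0n_neq0 q0)).
by rewrite /scale_set num_pq den_pq.
Qed.

Lemma B_term_coprime p q g : (0 < q)%N -> coprime p q -> (0 < g)%N ->
  B_term A (p * g) ((p + q) * g) = ratio_diff A p q.
Proof.
move=> q0 cpq g0.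
have cancel_g n : (n * g)%N%:Q / (q * g)%N%:Q = n%:Q / q%:Q.
  by rewrite !PoszM !intrM -mulf_div divff ?mulr1 // intr_eq0 eqz_nat -lt0n.
rewrite /B_term -mulnBl addKn !cancel_g !scale_set_coprime //.
by rewrite /coprime gcdnC gcdnDr gcdnC.
Qed.

Lemma B_set2_sub : B_set 2 A `<=` set_sub (scale_set 2%:Q A) A.
Proof.
move=> y [i [j [i1 ij j2]]].
have -> : i = 1%N by apply/eqP; rewrite eqn_leq i1 -ltnS (leq_trans ij j2).
have -> : j = 2%N by apply/eqP; rewrite eqn_leq j2 (leq_trans _ ij) ?ltnS.
rewrite (_ : (2%:Q / (2 - 1)%N%:Q) = 2%:Q); last by rewrite subn1 /= divr1.
rewrite (_ : (1%:Q / (2 - 1)%N%:Q) = 1); last by rewrite subn1 /= divr1.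
move=> [b [c [Bb [a0 Aa0 hc] ->]]]; exists b, c; split => //.
by move: hc; rewrite /= !mulr1z => ->.
Qed.

Variable a : G.
Hypothesis A_shift : forall s, A s -> A (s + a).
Hypothesis cosets : forall m, (0 < m)%N ->
  forall u : G, exists2 r, (r < m)%N & exists v, u = a *+ r + v *+ m.

Lemma A_shift_natmul s n : A s -> A (s + a *+ n).
Proof.
move=> As; elim: n => [|n IH]; first by rewrite addr0.
by rewrite mulrSr addrA; exact: A_shift.
Qed.

(* Bezout: km p = kn (p + q) + 1, so adding multiples of (p + q) a and of p a
   to the two terms of the difference shifts it by - a. *)
Lemma ratio_diff_subr p q y : (0 < p)%N -> coprime p q ->
  ratio_diff A p q y -> ratio_diff A p q (y - a).
Proof.
move=> p0 cpq [b [c [[b1 Ab1 hb] [c1 Ac1 hc] ->]]].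
have [km kn hk _] := egcdnP (p + q) p0.
move: hk; rewrite gcdnDl (eqP cpq) => hk.
exists (b + a *+ (kn * (p + q))), (c + a *+ (km * p)); split.
- exists (b1 + a *+ (q * kn)); first exact: A_shift_natmul.
  by rewrite !mulrnDl hb -!mulrnA mulnC mulnA.
- exists (c1 + a *+ (q * km)); first exact: A_shift_natmul.
  by rewrite !mulrnDl hc -!mulrnA mulnC mulnA.
- rewrite hk addn1 mulrSr opprD addrA opprD !addrA; congr (_ - _).
  by rewrite addrAC addrK.
Qed.

(* Shift y by r a so that y' + (p + q) s = q w; then
   y' = (y' + p w) - p w exhibits y' as an element of ratio_diff A p q. *)
Lemma ratio_diff_of_progression p q y s : (0 < p)%N -> (0 < q)%N -> coprime p q ->
  A (y + s *+ p) -> A (y + s *+ (p + q)) -> ratio_diff A p q y.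
Proof.
move=> p0 q0 cpq Ap Apq.
have [r _ [v hv]] := cosets q0 (- (y + s *+ (p + q))).
suff : ratio_diff A p q (y + a *+ r).
  elim: r {hv} => [|r IH]; first by rewrite addr0.
  by move=> /(ratio_diff_subr p0 cpq); rewrite mulrSr addrA addrK; exact: IH.
have Ap' : A ((y + a *+ r) + s *+ p) by rewrite addrAC; exact: A_shift_natmul.
have Apq' : A ((y + a *+ r) + s *+ (p + q)) by rewrite addrAC; exact: A_shift_natmul.
have qv : (- v) *+ q = (y + a *+ r) + s *+ (p + q).
  by rewrite mulNrn -[v *+ q](addKr (a *+ r)) -hv opprD !opprK addrCA addrA.
move: (y + a *+ r) (- v) qv Ap' Apq' => y' w qw Ap' Apq'.
exists (y' + w *+ p), (w *+ p); split; last by rewrite addrK.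
- exists (y' + s *+ p) => //.
  rewrite mulrnDl -mulrnA mulnC mulrnA qw mulrnDl -mulrnA addrA -mulrnDr.
  by rewrite mulrnDl -mulrnA mulnC mulrnA [(p + q)%N]addnC.
- by exists (y' + s *+ (p + q)) => //; rewrite -mulrnA mulnC mulrnA qw.
Qed.

Lemma B_term_of_progression i j y t : (0 < i)%N -> (i < j)%N ->
  A (y + t *+ i) -> A (y + t *+ j) -> B_term A i j y.
Proof.
move=> i0 ij; have [p [q [g [q0 cpq g0 ip jpq]]]] := nat_pair_coprime_parts i0 ij.
subst i j.
have p0 : (0 < p)%N by move: i0; rewrite muln_gt0 => /andP[->].
rewrite B_term_coprime // (mulnC p) (mulnC (p + q)) !mulrnA.
exact: ratio_diff_of_progression.
Qed.

Lemma B_set_progressions d y : ~ B_set d A y -> progressions_meet_once A d y.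
Proof.
move=> nB t i j Ai Aj; have [ij|ji|/val_inj //] := ltngtP i j; case: nB.
- by exists i.+1, j.+1; split=> //; exact: B_term_of_progression Ai Aj.
- by exists j.+1, i.+1; split=> //; exact: B_term_of_progression Aj Ai.
Qed.

End ScaledSets.

Definition multi_fibres (X Y : Type) (pi : X -> Y) : set Y :=
  [set y | exists x1 x2, [/\ x1 <> x2, pi x1 = y & pi x2 = y]].

Definition small_image (X Y : Type) (pi : X -> Y) (U : set X) : set Y :=
  [set y | forall x, pi x = y -> U x].

Section AlmostOneToOneExtension.
Variables (X : uniformType) (T Ti : X -> X) (Y : topologicalZmodType) (a : Y).
Variable pi : X -> Y.
Hypotheses (cX : compact [set: X]) (cT : continuous T) (TK : cancel T Ti)
  (TiK : cancel Ti T) (minT : minimal_system T) (cY : compact [set: Y])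
  (hY : hausdorff_space Y) (cpi : continuous pi)
  (pi_onto : forall y, exists x, pi x = y) (piT : forall x, pi (T x) = pi x + a).
Variable Om0 : set X.
Hypotheses (Om0_dense : dense Om0)
  (Om0_fibre : forall x, Om0 x -> pi @^-1` [set pi x] = [set x]).

Local Notation A := (multi_fibres pi).

Lemma pi_iter n x : pi (iter n T x) = pi x + a *+ n.
Proof.
elim: n => [|n IH]; first by rewrite addr0.
by rewrite iterS piT IH mulrSr addrA.
Qed.

Lemma pi_iterz m x : pi (iterz T Ti m x) = pi x + a *~ m.
Proof.
have pi_Ti y : pi (Ti y) = pi y - a by rewrite -{2}(TiK y) piT addrK.
case: m => [n|n] /=; first by rewrite pi_iter.
elim: n => [|n IH]; first by rewrite /= pi_Ti NegzE mulrNz.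
rewrite iterS pi_Ti IH !NegzE !mulrNz -addrA -opprD; congr (_ - _).
by rewrite -!pmulrn [in RHS]mulrSr.
Qed.

Lemma orbit_meets_open x (W : set X) :
  open W -> W !=set0 -> exists n, W (iter n T x).
Proof.
move=> oW [w Ww].
pose C := closure (range (fun n => iter n T x)).
have CT : C = setT.
  apply: minT; first exact: closed_closure.
    by exists x; apply: subset_closure; exists 0%N.
  move=> _ [c Cc <-] B /cT TB.
  have [_ [[n _ <-] Bn]] := Cc _ TB.
  by exists (iter n.+1 T x); split => //; exists n.+1.
have : C w by rewrite CT.
by move=> /(_ W (open_nbhs_nbhs (conj oW Ww))) [_ [[n _ <-] Wn]]; exists n.
Qed.

Lemma multiples_dense : dense (range (fun n : nat => a *+ n)).
Proof.
move=> Q [u Qu] oQ; have [x0 px0] := pi_onto 0; have [xu pxu] := pi_onto u.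
have oQ' : open (pi @^-1` Q) by apply: open_comp => // z _; exact: cpi.
have Qxu : (pi @^-1` Q) xu by rewrite /= pxu.
have [n Qn] := orbit_meets_open x0 oQ' (ex_intro _ xu Qxu).
by exists (a *+ n); split; [rewrite -[a *+ n]add0r -px0 -pi_iter|exists n].
Qed.

Lemma multi_fibres_shift s : A s -> A (s + a).
Proof.
move=> [x1 [x2 [x12 pix1 pix2]]]; exists (T x1), (T x2).
by split; [move=> /(can_inj TK)|rewrite piT pix1|rewrite piT pix2].
Qed.

Lemma small_image_open U : open U -> open (small_image pi U).
Proof.
move=> oU.
have -> : small_image pi U = ~` (pi @` (~` U)).
  apply/seteqP; split => [s Us [x nUx pix]|s nI x pix]; first exact/nUx/Us.
  by apply: contra_notP nI => nUx; exists x.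
rewrite openC; apply: continuous_closed_image => //.
by rewrite closedC.
Qed.

Lemma small_image_Om0 U x : Om0 x -> U x -> small_image pi U (pi x).
Proof.
move=> Om0x Ux x' pix'.
by have : (pi @^-1` [set pi x]) x' by []; rewrite Om0_fibre // => ->.
Qed.

Lemma small_image_single_fibre U x : U x -> ~ A (pi x) -> small_image pi U (pi x).
Proof.
move=> Ux nA x' pix'; apply: contrapT => nUx'; apply: nA.
by exists x', x; split => // x'x; apply: nUx'; rewrite x'x.
Qed.

Lemma Lx_progression d x w (i : 'I_d.+1) : @Lx X T Ti d.+1 x w ->
  pi (w i) = pi x + (pi (w ord0) - pi x) *+ i.+1.
Proof.
set y := pi x.
pose P := [set f : {ptws 'I_d.+1 -> X} |
  forall i, pi (f i) = y + (pi (f ord0) - y) *+ i.+1].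
suff : @Lx X T Ti d.+1 x `<=` P by move=> /[apply]; exact.
have ev_continuous j : continuous (fun f : {ptws 'I_d.+1 -> X} => pi (f j)).
  move=> f; apply: continuous_comp; last exact: cpi.
  exact: (@proj_continuous _ (fun=> X) j f).
have P_closed : closed P.
  have -> : P = \bigcap_(j in setT) [set f : {ptws 'I_d.+1 -> X} |
      pi (f j) = y + (pi (f ord0) - y) *+ j.+1].
    by apply/seteqP; split => [f Pf j _|f Pf j]; [exact: Pf|exact: Pf j Logic.I].
  apply: closed_bigI => j _; apply: closed_eq_zmod (ev_continuous j) _ => //.
  apply: zmod_continuousD => [f|]; first exact: cst_continuous.
  by apply: zmod_continuousMn; apply: zmod_continuousD => // f; exact: cst_continuous.
rewrite /Lx (closure_id P).1 //; apply: closureS.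
move=> _ [n _ <-] j /=.
rewrite !pi_iterz -/y mul1r [y + a *~ n]addrC addrK.
by rewrite pmulrn mulrzA_C.
Qed.

Lemma Lx_of_small_images d x (z : {ptws 'I_d -> X}) :
  (forall U : 'I_d -> set X, (forall i, open (U i) /\ U i (z i)) ->
     exists t, forall i, small_image pi (U i) (pi x + t *+ i.+1)) ->
  @Lx X T Ti d x z.
Proof.
move=> small_z B /ptws_nbhs_box[U [oU UB]].
have [t tU] := small_z U oU.
have : nbhs t [set u | forall i, small_image pi (U i) (pi x + u *+ i.+1)].
  apply: filter_forall => i.
  have : nbhs (pi x + t *+ i.+1) (small_image pi (U i)).
    apply: open_nbhs_nbhs; split; last exact: tU.
    by apply: small_image_open; case: (oU i).
  exact: affine_continuous.
move=> /(multiple_in_nbhs multiples_dense)[n nU].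
exists (fun i => iterz T Ti ((i.+1)%:Z * n%:Z) x); split; first by exists n%:Z.
apply: UB => i; apply: (nU i).
by rewrite pi_iterz -PoszM -pmulrn -mulrnA mulnC.
Qed.

(* The term y + t (k + 1) can be moved into the dense set Om0 of injectivity
   points while t stays in O, because multiplication by k + 1 is open. *)
Lemma perturb_progression_term k y t (O : set Y) (U : set X) z :
  open O -> O t -> open U -> U z -> pi z = y + t *+ k.+1 ->
  exists2 t', O t' & small_image pi U (y + t' *+ k.+1).
Proof.
move=> oO Ot oU Uz piz.
have tk_image := natmul_open_image cY hY multiples_dense (ltn0Sn k) oO Ot.
pose W := U `&` pi @^-1` (shift (- y) @^-1` interior [set u *+ k.+1 | u in O]).
have oW : open W.
  apply: openI oU (open_comp _ (open_shift _ (@open_interior _ _))) => x' _.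
  exact: cpi.
have Wz : W z by split => //; rewrite /= piz addrAC subrr add0r.
have [x' [[Ux' /interior_subset [t' Ot' t'x']] Om0x']] :=
  Om0_dense (ex_intro _ z Wz) oW.
exists t' => //; rewrite t'x' addrC subrK.
exact: small_image_Om0.
Qed.

Lemma small_images_of_progression d x (z : {ptws 'I_d -> X}) t :
  progressions_meet_once A d (pi x) -> (forall i, pi (z i) = pi x + t *+ i.+1) ->
  forall U : 'I_d -> set X, (forall i, open (U i) /\ U i (z i)) ->
    exists t', forall i, small_image pi (U i) (pi x + t' *+ i.+1).
Proof.
move=> once zt U oU; set y := pi x.
have small_t (i : 'I_d) :
    ~ A (y + t *+ i.+1) -> small_image pi (U i) (y + t *+ i.+1).
  by rewrite -zt; apply: small_image_single_fibre; case: (oU i).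
have [[k Ak]|noA] := pselect (exists k : 'I_d, A (y + t *+ k.+1)); last first.
  by exists t => i; apply: small_t => Ai; apply: noA; exists i.
pose O := [set u | forall i : 'I_d, i != k -> small_image pi (U i) (y + u *+ i.+1)].
have tO : nbhs t O.
  apply: filter_forall => i; have [->|ik] := eqVneq i k.
    by apply: nearW => u; case/negP.
  apply: filterS (fun u Vu _ => Vu) _.
  have : nbhs (y + t *+ i.+1) (small_image pi (U i)).
    apply: open_nbhs_nbhs; split; first by apply: small_image_open; case: (oU i).
    by apply: small_t => Ai; move/eqP: ik; apply; exact: once Ai Ak.
  exact: affine_continuous.
have [oUk Ukz] := oU k.
have [t' t'O t'k] := perturb_progression_term (@open_interior _ O) tO oUk Ukz (zt k).
exists t' => i; have [->|ik] := eqVneq i k; first exact: t'k.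
exact: interior_subset t'O i ik.
Qed.

Lemma Lx_saturated d x : progressions_meet_once A d.+1 (pi x) ->
  [set z : {ptws 'I_d.+1 -> X} | exists2 w, @Lx X T Ti d.+1 x w &
     (fun i => pi (w i)) = (fun i => pi (z i))] = @Lx X T Ti d.+1 x.
Proof.
move=> once; apply/seteqP; split => [z [w Lw wz]|z Lz]; last by exists z.
apply: Lx_of_small_images.
apply: (small_images_of_progression (t := pi (w ord0) - pi x) once) => i.
by rewrite -(Lx_progression i Lw); have /= <- := congr1 (fun f => f i) wz.
Qed.

Lemma dense_preimage_closureC (S : set Y) : nowhere_dense S ->
  dense (pi @^-1` ~` closure S).
Proof.
move=> ndS W W0 oW.
have [x' [Wx' Om0x']] := Om0_dense W0 oW.
have : ~ small_image pi W `<=` closure S.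
  move=> sub; suff : interior (closure S) (pi x') by rewrite ndS.
  apply: filterS sub _; apply: open_nbhs_nbhs.
  by split; [exact: small_image_open|exact: small_image_Om0].
move=> /existsNP[s /not_implyP[Ws nS]]; have [x'' px''] := pi_onto s.
by exists x''; split; [apply: Ws|rewrite /= px''].
Qed.

Lemma residual_preimage (B : set Y) : first_category B ->
  exists Om : set X, [/\ Gdelta Om, dense Om & forall x, Om x -> ~ B (pi x)].
Proof.
move=> [F [ndF BF]].
have oF n : open (pi @^-1` ~` closure (F n)).
  by apply: open_comp => [x _|]; [exact: cpi|rewrite openC; exact: closed_closure].
exists (\bigcap_n pi @^-1` ~` closure (F n)); split.
- by exists (fun n => pi @^-1` ~` closure (F n)).
- by apply: Baire_compact => // n; split; [exact: oF|exact: dense_preimage_closureC].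
- by move=> x Omx /BF [n _ Fn]; apply: (Omx n Logic.I); exact: subset_closure.
Qed.

Lemma top_char_factor_of_meager d (B : set Y) : first_category B ->
  (forall y, ~ B y -> progressions_meet_once A d.+1 y) ->
  top_char_factor T Ti pi d.+1.
Proof.
move=> /residual_preimage[Om [GOm dOm OmB]] once.
by exists Om; split => // x /OmB /once; exact: Lx_saturated.
Qed.

End AlmostOneToOneExtension.

Theorem theorem6p2 (R : realType) (X : pseudoMetricType R) (T Ti : X -> X)
  (Y : topologicalZmodType) (a : Y) (pi : X -> Y) :
  compact [set: X] -> hausdorff_space X ->
  continuous T -> continuous Ti -> cancel T Ti -> cancel Ti T ->
  minimal_system T ->
  max_equicontinuous_factor T a pi ->
  almost_one_to_one pi ->
  let A := [set y : Y | exists x1 x2 : X, [/\ x1 <> x2, pi x1 = y & pi x2 = y]] in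
  (first_category (set_sub (scale_set 2%:Q A) A) -> top_char_factor T Ti pi 2)
  /\
  (forall d : nat, (3 <= d)%N -> first_category (B_set d A) ->
     top_char_factor T Ti pi d).
Proof.
move=> cX _ cT _ TK TiK minT [cY hY [cpi pi_onto piT] _].
move=> [Om0 [_ Om0_dense Om0_fibre]] A.
have a_dense := multiples_dense cT minT cpi pi_onto piT.
have once d y : ~ B_set d A y -> progressions_meet_once A d y.
  apply: B_set_progressions (multi_fibres_shift TK piT) _ d y.
  exact: natmul_cosets cY hY a_dense.
have char_factor := top_char_factor_of_meager cX cT TiK minT cY hY cpi pi_onto piT
  Om0_dense Om0_fibre.
split => [meager2|[|d] // d3 meagerB].
- by apply: char_factor meager2 _ => y nB; apply: once => /B_set2_sub.
- exact: char_factor meagerB (once d.+1).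
Qed.
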